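(* Under the standing setting described in the context (in particular, $\mathcal{A}$ is a nonempty compact controlled invariant set satisfying the local $\ell_p$-stabilizability assumption, and $\alpha$ satisfies the stated bounds with $\bar p\ge p$), define $\mathbb{V}_{\infty}:=\{x\in\mathbb{R}^n : \mathcal{V}(\{x\})<\infty\}$ and $\mathbb{W}_{1}:=\{x\in\mathbb{R}^n : \mathcal{W}(\{x\})<1\}$. Then $\mathbb{V}_{\infty}=\mathbb{W}_{1}=\mathcal{D}_{\mathcal{A}}$.
   Context: Let $\|\cdot\|$ be a norm on $\mathbb{R}^n$ and $\mathrm{dist}(x,\Omega):=\inf_{y\in\Omega}\|x-y\|$. Let $\mathcal{K}(\mathbb{R}^n)$ denote the nonempty compact subsets of $\mathbb{R}^n$. Consider the discrete-time system $x_{k+1}=f(x_k,u_k)$, $k\in\mathbb{Z}_+$, where $f:\mathbb{R}^n\times\mathbb{R}^m\to\mathbb{R}^n$ is continuous and the inputs satisfy $u_k\in U$ for a nonempty compact $U\subset\mathbb{R}^m$. For $x\in\mathbb{R}^n$ and an input signal $\pi:\mathbb{Z}_+\to U$, the trajectory $\varphi_x^\pi$ is defined by $\varphi_x^\pi(0)=x$, $\varphi_x^\pi(k+1)=f(\varphi_x^\pi(k),\pi(k))$. For $X\subseteq\mathbb{R}^n$ and $k\in\mathbb{Z}_+$, the reachable set is $\mathcal{R}(X,k):=\{\varphi_x^\pi(k): x\in X,\ \pi\in U^{\mathbb{Z}_+}\}$. Let $\mathcal{A}\in\mathcal{K}(\mathbb{R}^n)$ be controlled invariant: for every $x\in\mathcal{A}$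 there is $u\in U$ with $f(x,u)\in\mathcal{A}$. Assume local $\ell_p$-stabilizability: there exist $r>0$, $M\ge1$, $p>0$ and $\lambda:[0,r]\times\mathbb{Z}_+\to\mathbb{R}_+$ such that (1) for each $k$, $s\mapsto\lambda(s,k)$ is continuous, nondecreasing, $\lambda(0,k)=0$; for each $s$, $k\mapsto\lambda(s,k)$ is nonincreasing and $\lambda(s,0)\le s$; (2) $\sum_{k=0}^\infty\lambda(r,k)^p<\infty$; (3) for every $x$ with $\mathrm{dist}(x,\mathcal{A})\le r$ there exists $\pi\in U^{\mathbb{Z}_+}$ with $\mathrm{dist}(\varphi_x^\pi(k),\mathcal{A})\le M\lambda(\mathrm{dist}(x,\mathcal{A}),k)$ for all $k\in\mathbb{Z}_+$. The domain of stabilization is $\mathcal{D}_{\mathcal{A}}:=\{x\in\mathbb{R}^n:\exists\pi\in U^{\mathbb{Z}_+}\text{ with }\lim_{k\to\infty}\mathrm{dist}(\varphi_x^\pi(k),\mathcal{A})=0\}$. Let $\alpha:\mathbb{R}^n\to\mathbb{R}_+$ be continuous with $\underline{\alpha}\,\mathrm{dist}(x,\mathcal{A})^{\bar p}\le\alpha(x)\le\overline{\alpha}\,\mathrm{dist}(x,\mathcal{A})^{\bar p}$ for all $x$, for some constants $\underline{\alpha},\overline{\alpha}>0$ and $\bar p\ge p$. Define $\Psi(X):=\inf_{y\in X}\alpha(y)$ for $X\in\mathcal{K}(\mathbb{R}^n)$, $\mathcal{V}(X):=\sum_{k=0}^\infty\Psi(\mathcal{R}(X,k))\in[0,\infty]$,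 and $\mathcal{W}(X):=1-\exp(-\mathcal{V}(X))$ with the convention $\exp(-\infty)=0$. *)

From HB Require Import structures.
From mathcomp Require Import all_boot all_order all_algebra.
From mathcomp Require Import all_classical all_reals all_analysis.
Set Implicit Arguments. Unset Strict Implicit. Unset Printing Implicit Defensive.
Import Order.TTheory GRing.Theory Num.Theory.
Import numFieldNormedType.Exports.
Local Open Scope ring_scope.
Local Open Scope classical_set_scope.

Definition is_norm {R : realType} {n : nat} (N : 'rV[R]_n -> R) : Prop :=
  [/\ (forall x, 0 <= N x), (forall x, N x = 0 -> x = 0),
      (forall (a : R) x, N (a *: x) = `|a| * N x) &
      (forall x y, N (x + y) <= N x + N y)].

Definition setdist {R : realType} {n : nat} (N : 'rV[R]_n -> R)
  (x : 'rV[R]_n) (Om : set 'rV[R]_n) : R :=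
  inf [set N (x - y) | y in Om].

Fixpoint traj {R : realType} {n m : nat} (f : 'rV[R]_n -> 'rV[R]_m -> 'rV[R]_n)
  (x : 'rV[R]_n) (pi : nat -> 'rV[R]_m) (k : nat) : 'rV[R]_n :=
  match k with
  | 0 => x
  | k'.+1 => f (traj f x pi k') (pi k')
  end.

Definition admissible {R : realType} {m : nat} (U : set 'rV[R]_m)
  (pi : nat -> 'rV[R]_m) : Prop := forall k, U (pi k).

Definition reach {R : realType} {n m : nat} (f : 'rV[R]_n -> 'rV[R]_m -> 'rV[R]_n)
  (U : set 'rV[R]_m) (X : set 'rV[R]_n) (k : nat) : set 'rV[R]_n :=
  [set y | exists x pi, [/\ X x, admissible U pi & y = traj f x pi k]].

Definition Psi {R : realType} {n : nat} (alpha : 'rV[R]_n -> R)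
  (X : set 'rV[R]_n) : R := inf [set alpha y | y in X].

Definition Vfun {R : realType} {n m : nat} (f : 'rV[R]_n -> 'rV[R]_m -> 'rV[R]_n)
  (U : set 'rV[R]_m) (alpha : 'rV[R]_n -> R) (X : set 'rV[R]_n) : \bar R :=
  (\sum_(0 <= k <oo) (Psi alpha (reach f U X k))%:E)%E.

(* W(X) := 1 - exp(-V(X)), with exp(-oo) = 0 *)
Definition Wfun {R : realType} {n m : nat} (f : 'rV[R]_n -> 'rV[R]_m -> 'rV[R]_n)
  (U : set 'rV[R]_m) (alpha : 'rV[R]_n -> R) (X : set 'rV[R]_n) : \bar R :=
  (1 - expeR (- Vfun f U alpha X))%E.

Definition stab_domain {R : realType} {n m : nat} (N : 'rV[R]_n -> R)
  (f : 'rV[R]_n -> 'rV[R]_m -> 'rV[R]_n) (U : set 'rV[R]_m) (A : set 'rV[R]_n)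
  : set 'rV[R]_n :=
  [set x | exists pi, admissible U pi /\
     (setdist N (traj f x pi k) A @[k --> \oo] --> (0 : R))].

Definition V_infty {R : realType} {n m : nat} (f : 'rV[R]_n -> 'rV[R]_m -> 'rV[R]_n)
  (U : set 'rV[R]_m) (alpha : 'rV[R]_n -> R) : set 'rV[R]_n :=
  [set x | (Vfun f U alpha [set x] < +oo)%E].

Definition W_1 {R : realType} {n m : nat} (f : 'rV[R]_n -> 'rV[R]_m -> 'rV[R]_n)
  (U : set 'rV[R]_m) (alpha : 'rV[R]_n -> R) : set 'rV[R]_n :=
  [set x | (Wfun f U alpha [set x] < 1)%E].

From HB Require Import structures.
From mathcomp Require Import all_boot all_order all_algebra.
From mathcomp Require Import all_classical all_reals all_analysis.
Import Order.TTheory GRing.Theory Num.Theory.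
Import numFieldNormedType.Exports.
Local Open Scope ring_scope.
Local Open Scope classical_set_scope.

(* A state lies in the domain of stabilization iff some admissible trajectory
   from it enters the r-neighbourhood of A: from there on, the stabilizing input
   of the l_p assumption can be appended.  If V(x) < oo, the terms Psi(R(x,k))
   tend to 0, so some reachable state has alpha < alpha_lo r^pbar and therefore
   lies within distance r of A.  Conversely, along the stabilized trajectory
   alpha is eventually bounded by alpha_hi M^p lambda(r,k)^p (as pbar >= p and
   eventually M lambda(r,k) <= 1), a summable sequence, so V(x) < oo.  Finally
   W = 1 - exp(-V) is < 1 exactly when V < oo. *)

Definition concat_input {R : realType} {m : nat} (pi pi' : nat -> 'rV[R]_m)
    (K : nat) : nat -> 'rV[R]_m :=
  fun k => if (k < K)%N then pi k else pi' (k - K)%N.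

Section Trajectories.
Context {R : realType} {n m : nat} (f : 'rV[R]_n -> 'rV[R]_m -> 'rV[R]_n).

Lemma traj_concat_input_le x pi pi' K k :
  (k <= K)%N -> traj f x (concat_input pi pi' K) k = traj f x pi k.
Proof.
by elim: k => [//|k IH] ltkK /=; rewrite IH ?(ltnW ltkK) // /concat_input ltkK.
Qed.

Lemma traj_concat_input x pi pi' K j :
  traj f x (concat_input pi pi' K) (K + j) = traj f (traj f x pi K) pi' j.
Proof.
elim: j => [|j IH]; first by rewrite addn0 traj_concat_input_le.
by rewrite addnS /= IH /concat_input ltnNge leq_addr /= addKn.
Qed.

Lemma admissible_concat_input (U : set 'rV[R]_m) pi pi' K :
  admissible U pi -> admissible U pi' -> admissible U (concat_input pi pi' K).
Proof. by move=> Upi Upi' k; rewrite /concat_input; case: ifP. Qed.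

Lemma reach_traj (U : set 'rV[R]_m) x pi k :
  admissible U pi -> reach f U [set x] k (traj f x pi k).
Proof. by move=> Upi; exists x, pi. Qed.

Lemma reach_set1_neq0 (U : set 'rV[R]_m) x k :
  U !=set0 -> reach f U [set x] k !=set0.
Proof. by move=> [u Uu]; exists (traj f x (fun=> u) k); apply: reach_traj. Qed.

End Trajectories.

Lemma setdist_ge0 {R : realType} {n : nat} (N : 'rV[R]_n -> R) x
    (A : set 'rV[R]_n) :
  (forall z, 0 <= N z) -> A !=set0 -> 0 <= setdist N x A.
Proof.
move=> N_ge0 [a Aa]; apply: lb_le_inf; first by exists (N (x - a)), a.
by move=> _ [y _ <-].
Qed.

Section Psi.
Context {R : realType} {n : nat} (alpha : 'rV[R]_n -> R).
Hypothesis alpha_ge0 : forall z, 0 <= alpha z.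

Lemma Psi_le (X : set 'rV[R]_n) y : X y -> Psi alpha X <= alpha y.
Proof. by move=> Xy; apply: ge_inf; [exists 0 => _ [z _ <-] | exists y]. Qed.

Lemma Psi_ge0 (X : set 'rV[R]_n) : X !=set0 -> 0 <= Psi alpha X.
Proof.
move=> [y Xy]; apply: lb_le_inf; first by exists (alpha y), y.
by move=> _ [z _ <-].
Qed.

Lemma Psi_lt (X : set 'rV[R]_n) c :
  X !=set0 -> Psi alpha X < c -> exists2 y, X y & alpha y < c.
Proof.
move=> [y0 Xy0] /inf_lt[|_ [y Xy <-]]; last by exists y.
by exists (alpha y0), y0.
Qed.

End Psi.

Lemma nneseries_lt_oo_cvg0 {R : realType} (a : nat -> R) :
  (forall k, 0 <= a k) -> (\sum_(0 <= k <oo) (a k)%:E < +oo)%E ->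
  a @ \oo --> 0.
Proof. by move=> a_ge0 /(nnseries_is_cvg a_ge0); apply: cvg_series_cvg_0. Qed.

Lemma cvg0_powR {R : realType} (a : nat -> R) (p : R) :
  (forall j, 0 <= a j) -> 0 < p ->
  (fun j => a j `^ p) @ \oo --> 0 -> a @ \oo --> 0.
Proof.
move=> a_ge0 p_gt0 /cvgrPdist_lt ap0; apply/cvgrPdist_lt => e e_gt0.
apply: filterS (ap0 _ (powR_gt0 p e_gt0)) => j.
rewrite !sub0r !normrN !ger0_norm ?powR_ge0 // => ajp_lt.
rewrite ltNge; apply/negP => /(ge0_ler_powR (ltW p_gt0)).
rewrite !nnegrE (ltW e_gt0) a_ge0 => /(_ isT isT).
by rewrite leNgt ajp_lt.
Qed.

Lemma ge0_ger_powR {R : realType} (x p q : R) :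
  0 <= x <= 1 -> 0 < p -> p <= q -> x `^ q <= x `^ p.
Proof.
move=> /andP[x_ge0 x_le1] p_gt0 pq; have [->|x_neq0] := eqVneq x 0.
  by rewrite !powR0 ?gt_eqF // (lt_le_trans p_gt0 pq).
by apply: ger_powR => //; rewrite x_le1 lt_neqAle eq_sym x_neq0 x_ge0.
Qed.

Lemma nneseries_shift_lt_oo {R : realType} (a b : nat -> R) (c : R) K :
  (forall k, 0 <= a k) -> (forall k, 0 <= b k) -> 0 <= c ->
  (forall i, a (i + K)%N <= c * b i) ->
  (\sum_(0 <= k <oo) (b k)%:E < +oo)%E -> (\sum_(0 <= k <oo) (a k)%:E < +oo)%E.
Proof.
move=> a_ge0 b_ge0 c_ge0 abK b_fin.
have b_num : (\sum_(0 <= k <oo) (b k)%:E)%E \is a fin_num.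
  by rewrite ge0_fin_numE // nneseries_ge0 // => k _ _; rewrite lee_fin.
rewrite (nneseries_split 0 K) => [|k _]; last by rewrite lee_fin.
rewrite add0n -nneseries_addn => [|k]; last by rewrite lee_fin.
apply: (@le_lt_trans _ _ (\sum_(0 <= k < K) (a k)%:E + (c * fine
  (\sum_(0 <= k <oo) (b k)%:E))%:E)%E); last by rewrite sumEFin -EFinD ltry.
apply: leeD2l; rewrite EFinM fineK // -nneseriesZl => [|k _]; last first.
  by rewrite lee_fin.
by apply: lee_nneseries => [i _ _|i _]; rewrite ?lee_fin // -EFinM lee_fin.
Qed.

Section ValueFunction.
Context {R : realType} {n m : nat} (f : 'rV[R]_n -> 'rV[R]_m -> 'rV[R]_n).
Context {U : set 'rV[R]_m} {alpha : 'rV[R]_n -> R}.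
Hypotheses (U_neq0 : U !=set0) (alpha_ge0 : forall z, 0 <= alpha z).

Lemma Psi_reach_ge0 x k : 0 <= Psi alpha (reach f U [set x] k).
Proof. exact/Psi_ge0/reach_set1_neq0. Qed.

Lemma V_infty_eq_W_1 : V_infty f U alpha = W_1 f U alpha.
Proof.
have V_ge0 x : (0 <= Vfun f U alpha [set x])%E.
  by apply: nneseries_ge0 => k _ _; rewrite lee_fin Psi_reach_ge0.
apply/seteqP; split=> x; rewrite /V_infty /W_1 /Wfun /=;
  move: (V_ge0 x); case: (Vfun f U alpha [set x]) => [v| |] //= _.
- by move=> _; rewrite -EFinD lte_fin gtrDl oppr_lt0 expR_gt0.
- by rewrite ltry.
- by rewrite -EFinD subr0 lte_fin !ltxx.
Qed.

End ValueFunction.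

Section StabilizationDomain.
Context {R : realType} {n m : nat} {N : 'rV[R]_n -> R}.
Context {f : 'rV[R]_n -> 'rV[R]_m -> 'rV[R]_n} {U : set 'rV[R]_m}.
Context {A : set 'rV[R]_n} {r M p : R} {lambda : R -> nat -> R}.
Hypotheses (N_ge0 : forall z, 0 <= N z) (U_neq0 : U !=set0) (A_neq0 : A !=set0).
Hypotheses (r_gt0 : 0 < r) (M_ge1 : 1 <= M) (p_gt0 : 0 < p).
Hypothesis lambda_mono : forall k s1 s2,
  0 <= s1 -> s1 <= s2 -> s2 <= r -> lambda s1 k <= lambda s2 k.
Hypothesis lambda_ge0 : forall s k, 0 <= s <= r -> 0 <= lambda s k.
Hypothesis lambda_decr : forall s k1 k2,
  0 <= s <= r -> (k1 <= k2)%N -> lambda s k2 <= lambda s k1.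
Hypothesis lambda_sum : (\sum_(0 <= k <oo) ((lambda r k) `^ p)%:E < +oo)%E.
Hypothesis stabilizable : forall x, setdist N x A <= r ->
  exists pi, admissible U pi /\
    forall k, setdist N (traj f x pi k) A <= M * lambda (setdist N x A) k.

Let M_gt0 : 0 < M. Proof. exact: lt_le_trans M_ge1. Qed.

Let lambda_r_ge0 k : 0 <= lambda r k.
Proof. by rewrite lambda_ge0 // lexx ltW. Qed.

Lemma lambda_r_cvg0 : lambda r @ \oo --> 0.
Proof.
apply: (cvg0_powR _ _ lambda_r_ge0 p_gt0).
exact: nneseries_lt_oo_cvg0 _ (fun k => powR_ge0 _ _) lambda_sum.
Qed.

Lemma stabilize_from x pi K :
  admissible U pi -> setdist N (traj f x pi K) A <= r ->
  exists2 pi', admissible U pi' &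
    forall j, setdist N (traj f x pi' (K + j)) A <= M * lambda r j.
Proof.
move=> Upi dK; have [pi' [Upi' stab']] := stabilizable _ dK.
exists (concat_input pi pi' K); first exact: admissible_concat_input.
move=> j; rewrite traj_concat_input; apply: le_trans (stab' j) _.
by rewrite ler_wpM2l ?(ltW M_gt0) // lambda_mono ?setdist_ge0.
Qed.

Lemma stab_domainP x : stab_domain N f U A x <->
  exists pi K, admissible U pi /\ setdist N (traj f x pi K) A <= r.
Proof.
split=> [[pi [Upi /cvgrPdist_lt/(_ r r_gt0)[K _ near_A]]]|[pi [K [Upi dK]]]].
  exists pi, K; split => //; have := near_A K (leqnn K).
  by rewrite sub0r normrN ger0_norm ?setdist_ge0 // => /ltW.
have [pi' Upi' dK'] := stabilize_from x pi K Upi dK.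
exists pi'; split => //; rewrite -(cvg_shiftn K) /=.
apply: (@squeeze_cvgr _ _ _ _ (cst 0) (fun j => M * lambda r j)).
- by apply: nearW => j; rewrite /= addnC setdist_ge0 // dK'.
- exact: cvg_cst.
- by rewrite -(mulr0 M); apply: cvgM lambda_r_cvg0; exact: cvg_cst.
Qed.

Lemma V_infty_sub_stab_domain (alpha : 'rV[R]_n -> R) (alpha_lo pbar : R) :
  (forall z, 0 <= alpha z) -> 0 < alpha_lo -> 0 < pbar ->
  (forall x, alpha_lo * setdist N x A `^ pbar <= alpha x) ->
  V_infty f U alpha `<=` stab_domain N f U A.
Proof.
move=> alpha_ge0 lo_gt0 pbar_gt0 alpha_lb x Vx.
have eps_gt0 : 0 < alpha_lo * r `^ pbar by rewrite mulr_gt0 // powR_gt0.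
have /cvgrPdist_lt/(_ _ eps_gt0)[K _ Psi_small] :=
  nneseries_lt_oo_cvg0 _ (Psi_reach_ge0 f U_neq0 alpha_ge0 x) Vx.
have := Psi_small K (leqnn K).
rewrite sub0r normrN ger0_norm ?Psi_reach_ge0 //.
have reach_neq0 := reach_set1_neq0 f U x K U_neq0.
move=> /(Psi_lt alpha _ _ reach_neq0)[_ [_ [pi [-> Upi ->]]]].
move=> alpha_lt; apply/stab_domainP; exists pi, K; split => //.
rewrite leNgt; apply/negP => r_lt; move: alpha_lt; apply/negP; rewrite -leNgt.
apply: le_trans (alpha_lb _); rewrite ler_wpM2l ?(ltW lo_gt0) //.
apply: ge0_ler_powR; rewrite ?nnegrE ?(ltW pbar_gt0) ?(ltW r_gt0) ?(ltW r_lt)//.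
exact: setdist_ge0.
Qed.

Lemma stab_domain_sub_V_infty (alpha : 'rV[R]_n -> R) (alpha_hi pbar : R) :
  (forall z, 0 <= alpha z) -> 0 < alpha_hi -> p <= pbar ->
  (forall x, alpha x <= alpha_hi * setdist N x A `^ pbar) ->
  stab_domain N f U A `<=` V_infty f U alpha.
Proof.
move=> alpha_ge0 hi_gt0 p_le_pbar alpha_ub x /stab_domainP[pi [K [Upi dK]]].
have [pi' Upi' dK'] := stabilize_from x pi K Upi dK.
have /cvgrPdist_lt/(_ M^-1)[|J _ lambda_small] := lambda_r_cvg0.
  by rewrite invr_gt0.
have t_le1 i : M * lambda r (i + J) <= 1.
  have := lambda_small _ (leq_addl i J).
  rewrite sub0r normrN ger0_norm // => /ltW.
  by rewrite -(ler_pM2l M_gt0) mulfV ?gt_eqF.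
have alpha_tail i : alpha (traj f x pi' (K + (i + J))) <=
    alpha_hi * M `^ p * lambda r i `^ p.
  set t := M * lambda r (i + J).
  have t_ge0 : 0 <= t by rewrite mulr_ge0 ?(ltW M_gt0).
  apply: le_trans (alpha_ub _) _; rewrite -mulrA ler_wpM2l ?(ltW hi_gt0) //.
  apply: (@le_trans _ _ (t `^ pbar)).
    apply: ge0_ler_powR; rewrite ?nnegrE ?setdist_ge0 ?dK' //.
    exact: le_trans (ltW p_gt0) p_le_pbar.
  apply: le_trans (ge0_ger_powR _ _ _ _ p_gt0 p_le_pbar) _.
    by rewrite t_ge0 t_le1.
  rewrite powRM ?(ltW M_gt0) // ler_wpM2l ?powR_ge0 //.
  apply: ge0_ler_powR; rewrite ?nnegrE ?(ltW p_gt0) //.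
  by rewrite lambda_decr ?leq_addr // lexx ltW.
apply: (nneseries_shift_lt_oo _ _ (alpha_hi * M `^ p) (K + J)
  _ _ _ _ lambda_sum).
- exact: Psi_reach_ge0.
- by move=> k; rewrite powR_ge0.
- by rewrite mulr_ge0 ?powR_ge0 ?(ltW hi_gt0).
- move=> i; apply: le_trans (alpha_tail i); apply: Psi_le => //.
  by rewrite addnCA; apply: reach_traj.
Qed.

End StabilizationDomain.

Theorem theorem2 (R : realType) (n m : nat) (N : 'rV[R]_n -> R)
  (f : 'rV[R]_n -> 'rV[R]_m -> 'rV[R]_n) (U : set 'rV[R]_m) (A : set 'rV[R]_n)
  (r M p : R) (lambda : R -> nat -> R) (alpha : 'rV[R]_n -> R)
  (alpha_lo alpha_hi pbar : R) :
  is_norm N ->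
  continuous (fun z : 'rV[R]_n * 'rV[R]_m => f z.1 z.2) ->
  compact U -> U !=set0 ->
  compact A -> A !=set0 ->
  (forall x, A x -> exists2 u, U u & A (f x u)) ->
  (* local l_p-stabilizability *)
  0 < r -> 1 <= M -> 0 < p ->
  (forall k, {within `[0, r], continuous (fun s => lambda s k)}) ->
  (forall k s1 s2, 0 <= s1 -> s1 <= s2 -> s2 <= r -> lambda s1 k <= lambda s2 k) ->
  (forall k, lambda 0 k = 0) ->
  (forall s k, 0 <= s <= r -> 0 <= lambda s k) ->
  (forall s k1 k2, 0 <= s <= r -> (k1 <= k2)%N -> lambda s k2 <= lambda s k1) ->
  (forall s, 0 <= s <= r -> lambda s 0 <= s) ->
  (\sum_(0 <= k <oo) ((lambda r k) `^ p)%:E < +oo)%E ->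
  (forall x, setdist N x A <= r ->
     exists pi, admissible U pi /\
       forall k, setdist N (traj f x pi k) A <= M * lambda (setdist N x A) k) ->
  (* alpha *)
  continuous alpha ->
  (forall x, 0 <= alpha x) ->
  0 < alpha_lo -> 0 < alpha_hi -> p <= pbar ->
  (forall x, alpha_lo * (setdist N x A) `^ pbar <= alpha x /\
             alpha x <= alpha_hi * (setdist N x A) `^ pbar) ->
  V_infty f U alpha = W_1 f U alpha /\ W_1 f U alpha = stab_domain N f U A.
Proof.
move=> [N_ge0 _ _ _] _ _ U_neq0 _ A_neq0 _ r_gt0 M_ge1 p_gt0 _ lambda_mono _
  lambda_ge0 lambda_decr _ lambda_sum stabilizable _ alpha_ge0 lo_gt0 hi_gt0
  p_le_pbar alpha_bounds.
have V_eq_W : V_infty f U alpha = W_1 f U alpha by exact: V_infty_eq_W_1.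
split=> //; rewrite -V_eq_W; apply/seteqP; split.
- apply: (V_infty_sub_stab_domain N_ge0 U_neq0 A_neq0 r_gt0 M_ge1 p_gt0
    lambda_mono lambda_ge0 lambda_sum stabilizable alpha alpha_lo pbar alpha_ge0
    lo_gt0).
    exact: lt_le_trans p_gt0 p_le_pbar.
  by move=> x; case: (alpha_bounds x).
- apply: (stab_domain_sub_V_infty N_ge0 U_neq0 A_neq0 r_gt0 M_ge1 p_gt0
    lambda_mono lambda_ge0 lambda_decr lambda_sum stabilizable alpha alpha_hi
    pbar alpha_ge0 hi_gt0 p_le_pbar).
  by move=> x; case: (alpha_bounds x).
Qed.
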